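(* Suppose $T$ has the f.s. dichotomy, $M\preceq\mathbb{C}$ is small, and $\langle A_i:i\in I\rangle$ is an $M$-f.s. sequence. Then for every $c\in\mathbb{C}$ there is a simple extension $\langle A'_j:j\in J\rangle$ of $\langle A_i:i\in I\rangle$ which is an $M$-f.s. sequence and has $c\in\bigcup_jA'_j$. Moreover, if $(I,\le)$ is a well-ordering with a maximum element, one may take $J=I$.
   Context: Work in a monster model $\mathbb{C}$ of $T$. For $B\supseteq M$, $\mathrm{tp}(A/B)$ is finitely satisfied in $M$ if each of its formulas is satisfied by a tuple from $M$. $T$ has the f.s. dichotomy if for every small model $M$ and finite tuples $\bar a,\bar b$ with $\mathrm{tp}(\bar b/M\bar a)$ finitely satisfied in $M$, for every singleton $c$ either $\mathrm{tp}(\bar b/M\bar ac)$ or $\mathrm{tp}(\bar bc/M\bar a)$ is finitely satisfied in $M$. For a sequence of sets $\langle A_i:i\in I\rangle$, $A_{<i}=\bigcup_{j<i}A_j$. An $M$-f.s. sequence is a sequence of sets $\langle A_i:i\in I\rangle$ such that $\mathrm{tp}(A_i/A_{<i}M)$ is finitely satisfied in $M$ for every $i$. A sequence $\langle A'_j:j\in J\rangle$ is a simple extension of $\langle A_i:i\in I\rangle$ if $I\subseteq J$ and $A_i\subseteq A'_i$ for all $i\in I$ (i.e. $\langle A_i\rangle$ is obtained from it by passing to a subsequence and shrinking the sets). *)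

From Stdlib Require Import List.
Import ListNotations.

Set Implicit Arguments.
Unset Strict Implicit.

Record signature := Signature { fsym : Type; rsym : Type }.

Section Logic.
Variable L : signature.

Inductive term : Type :=
| tvar : nat -> term
| tapp : fsym L -> list term -> term.

Inductive formula : Type :=
| feq : term -> term -> formula
| frel : rsym L -> list term -> formula
| fneg : formula -> formula
| fand : formula -> formula -> formula
| fex : nat -> formula -> formula.

Record structure := Structure {
  carrier :> Type;
  fint : fsym L -> list carrier -> carrier;
  rint : rsym L -> list carrier -> Prop }.

Variable C : structure.

Fixpoint eval (v : nat -> C) (t : term) : C :=
  match t with
  | tvar n => v n
  | tapp f l => fint f (map (eval v) l)
  end.

Definition upd (v : nat -> C) (n : nat) (c : C) : nat -> C :=
  fun k => if Nat.eqb k n then c else v k.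

Fixpoint sat_in (D : C -> Prop) (v : nat -> C) (phi : formula) : Prop :=
  match phi with
  | feq t1 t2 => eval v t1 = eval v t2
  | frel r l => rint r (map (eval v) l)
  | fneg p => ~ sat_in D v p
  | fand p q => sat_in D v p /\ sat_in D v q
  | fex n p => exists c, D c /\ sat_in D (upd v n c) p
  end.

Definition sat (v : nat -> C) (phi : formula) : Prop :=
  sat_in (fun _ => True) v phi.

Definition elem_sub (M : C -> Prop) : Prop :=
  (exists m, M m) /\
  (forall f l, Forall M l -> M (fint f l)) /\
  (forall phi v, (forall n, M (v n)) -> (sat_in M v phi <-> sat v phi)).

(* tp(A/B) is finitely satisfied in M: every formula phi(x_a.., b..) true in C,
   with the variables in S assigned elements of A and the others parameters
   from B, is satisfied after replacing each a in A by some element g a of M. *)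
Definition fs (M A B : C -> Prop) : Prop :=
  forall (phi : formula) (S : nat -> bool) (v : nat -> C),
    (forall n, if S n then A (v n) else B (v n)) ->
    sat v phi ->
    exists g : C -> C, (forall a, A a -> M (g a)) /\
      sat (fun n => if S n then g (v n) else v n) phi.

Definition setU (X Y : C -> Prop) : C -> Prop := fun x => X x \/ Y x.
Definition of_list (l : list C) : C -> Prop := fun x => In x l.
Definition set1 (c : C) : C -> Prop := fun x => x = c.

(* The f.s. dichotomy (for T = Th(C), over elementary substructures of C). *)
Definition fs_dichotomy : Prop :=
  forall M, elem_sub M ->
  forall a b : list C,
    fs M (of_list b) (setU M (of_list a)) ->
    forall c : C,
      fs M (of_list b) (setU (setU M (of_list a)) (set1 c)) \/
      fs M (setU (of_list b) (set1 c)) (setU M (of_list a)).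

Definition below (I : Type) (lt : I -> I -> Prop) (A : I -> C -> Prop) (i : I)
  : C -> Prop := fun x => exists j, lt j i /\ A j x.

Definition fs_seq (M : C -> Prop) (I : Type) (lt : I -> I -> Prop)
  (A : I -> C -> Prop) : Prop :=
  forall i, fs M (A i) (setU (below lt A i) M).

End Logic.

Arguments elem_sub {L} C M.
Arguments fs {L} C M A B.
Arguments fs_dichotomy {L} C.
Arguments fs_seq {L} C M {I} lt A.
Arguments sat {L} C v phi.

Definition strict_linear (I : Type) (lt : I -> I -> Prop) : Prop :=
  (forall x, ~ lt x x) /\
  (forall x y z, lt x y -> lt y z -> lt x z) /\
  (forall x y, lt x y \/ x = y \/ lt y x).

Definition well_founded_linear (I : Type) (lt : I -> I -> Prop) : Prop :=
  forall P : I -> Prop, (exists i, P i) ->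
    exists i, P i /\ forall j, P j -> ~ lt j i.

From Stdlib Require Import List Arith Classical ClassicalEpsilon FunctionalExtensionality.
Import ListNotations.

(* Fix c and call an index i rigid when tp(A_i / A_{<i} M c) is NOT
   finitely satisfied in M; by the f.s. dichotomy (lifted from finite tuples
   to arbitrary sets via the finite character of finite satisfiability),
   tp(A_i c / A_{<i} M) is then finitely satisfied in M.
   - If some rigid k is maximal among the rigid indices, put c into A_k: the
     later A_j are non-rigid, so their types stay f.s. over a base containing c.
   - Otherwise the down-closure D of the rigid indices has no maximum; every
     finite part of A_D lies in some A_{<d}, d rigid, so tp(c / A_D M) is f.s.
     Inserting the singleton {c} at the cut just above D gives the simple
     extension.  If I is well ordered with a maximum, the least index k
     outside D exists, and by transitivity tp(A_k c / A_{<k} M) is f.s.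
     (A_{<k} = A_D), so c can be put into A_k instead, keeping J = I. *)

Section Syntax.
Context {L : signature} {C : structure L}.

Fixpoint term_ind_nested (P : term L -> Prop) (Hvar : forall n, P (tvar L n))
  (Happ : forall f l, Forall P l -> P (tapp f l)) (t : term L) : P t :=
  match t with
  | tvar _ n => Hvar n
  | tapp f l => Happ f l ((fix go (l : list (term L)) : Forall P l :=
       match l with
       | [] => Forall_nil _
       | t :: l => Forall_cons _ (term_ind_nested P Hvar Happ t) (go l)
       end) l)
  end.

(* Free variables (an over-approximation for formulas is enough). *)
Fixpoint fv_term (t : term L) : list nat :=
  match t with
  | tvar _ n => [n]
  | tapp _ l => flat_map fv_term l
  end.

Fixpoint fv (p : formula L) : list nat :=
  match p with
  | feq t1 t2 => fv_term t1 ++ fv_term t2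
  | frel _ l => flat_map fv_term l
  | fneg p => fv p
  | fand p q => fv p ++ fv q
  | fex n p => n :: fv p
  end.

Lemma eval_agree (v v' : nat -> C) t :
  (forall n, In n (fv_term t) -> v n = v' n) -> eval v t = eval v' t.
Proof.
  induction t as [n|f l IH] using term_ind_nested; intros Hvv'; simpl in *.
  - auto.
  - f_equal. induction IH as [|t l Ht _ IHl]; simpl in *; auto.
    f_equal; [apply Ht | apply IHl]; intros n Hn; apply Hvv', in_or_app; auto.
Qed.

Lemma map_eval_agree (v v' : nat -> C) l :
  (forall n, In n (flat_map fv_term l) -> v n = v' n) -> map (eval v) l = map (eval v') l.
Proof.
  intros Hvv'. apply map_ext_in. intros t Ht. apply eval_agree.
  intros n Hn. apply Hvv', in_flat_map. eauto.
Qed.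

Lemma sat_agree (D : C -> Prop) phi : forall v v' : nat -> C,
  (forall n, In n (fv phi) -> v n = v' n) -> (sat_in D v phi <-> sat_in D v' phi).
Proof.
  induction phi as [t1 t2|r l|p IH|p IHp q IHq|n p IH]; intros v v' Hvv'; simpl in *.
  - rewrite (eval_agree v v' t1), (eval_agree v v' t2); [tauto| |];
      intros; apply Hvv', in_or_app; auto.
  - rewrite (map_eval_agree v v' l); tauto.
  - rewrite (IH v v'); tauto.
  - rewrite (IHp v v'), (IHq v v'); [tauto| |]; intros; apply Hvv', in_or_app; auto.
  - assert (Hupd : forall d, forall m, In m (fv p) -> upd v n d m = upd v' n d m).
    { intros d m Hm. unfold upd. destruct (Nat.eqb m n); auto. }
    split; intros [d [Dd Hd]]; exists d; split; auto;
      [rewrite <- (IH _ _ (Hupd d)) | rewrite (IH _ _ (Hupd d))]; exact Hd.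
Qed.

Definition exl (l : list nat) (p : formula L) : formula L :=
  fold_right (fun n q => fex n q) p l.

Lemma sat_exl (D : C -> Prop) l p : forall w,
  sat_in D w (exl l p) <-> exists u, (forall n, In n l -> D (u n)) /\
     (forall n, ~ In n l -> u n = w n) /\ sat_in D u p.
Proof.
  induction l as [|n l IH]; intro w; simpl.
  - split.
    + intro Hp; exists w; split; [intros _ []|split; auto].
    + intros [u [_ [Hu Hp]]].
      replace w with u; auto. apply functional_extensionality; intro; apply Hu; auto.
  - split.
    + intros [d [Dd Hs]]. apply IH in Hs as [u [Hu1 [Hu2 Hp]]].
      exists u; split; [|split; auto].
      * intros n' [<-|Hn']; auto.
        destruct (in_dec Nat.eq_dec n l); auto.
        rewrite Hu2 by auto. unfold upd. rewrite Nat.eqb_refl; auto.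
      * intros n' Hn'. rewrite Hu2 by tauto. unfold upd.
        destruct (Nat.eqb n' n) eqn:E; auto.
        apply Nat.eqb_eq in E; subst; tauto.
    + intros [u [Hu1 [Hu2 Hp]]]. exists (u n). split; [auto|].
      apply IH. exists u; split; auto. split; auto.
      intros n' Hn'. unfold upd. destruct (Nat.eqb n' n) eqn:E.
      * apply Nat.eqb_eq in E; subst; auto.
      * apply Hu2. intros [<-|E']; [rewrite Nat.eqb_refl in E; discriminate|tauto].
Qed.

Definition eqs (l : list nat) (x : nat) : formula L :=
  fold_right (fun n q => fand (feq (tvar L n) (tvar L x)) q) (feq (tvar L x) (tvar L x)) l.

Lemma sat_eqs (D : C -> Prop) u l x :
  sat_in D u (eqs l x) <-> forall n, In n l -> u n = u x.
Proof.
  induction l as [|n l IH]; simpl.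
  - split; auto. intros _ _ [].
  - rewrite IH. split.
    + intros [H1 H2] n' [<-|H]; auto.
    + intros H; split; auto.
Qed.

End Syntax.

Section FiniteSatisfiability.
Context {L : signature} {C : structure L}.

Lemma fs_mono {M A A' B B' : C -> Prop} :
  fs C M A B -> (forall x, A' x -> A x) -> (forall x, B' x -> B x) -> fs C M A' B'.
Proof.
  intros Hfs HA HB phi S v Hv Hs.
  destruct (Hfs phi S v) as [g [Hg Hs']]; [|exact Hs|exists g; auto].
  intro n; specialize (Hv n); destruct (S n); auto.
Qed.

Lemma fs_empty (M B : C -> Prop) : fs C M (fun _ => False) B.
Proof.
  intros phi S v Hv Hs. exists (fun x => x). split; [intros a []|].
  replace (fun n => if S n then v n else v n) with v; auto.
  apply functional_extensionality; intro n; destruct (S n); reflexivity.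
Qed.

(* Only the free variables of a formula matter,
   and the others can be sent to a fixed element of M. *)
Lemma fs_finite {M X Y : C -> Prop} : (exists m, M m) ->
  (forall x y : list C, (forall a, In a x -> X a) -> (forall a, In a y -> Y a) ->
     fs C M (of_list x) (setU M (of_list y))) -> fs C M X Y.
Proof.
  intros [m0 Hm0] Hfin phi S v Hv Hs.
  set (F := fv phi).
  set (x := map v (filter S F)).
  set (y := map v (filter (fun n => negb (S n)) F)).
  set (v' := fun n => if in_dec Nat.eq_dec n F then v n else m0).
  set (S' := fun n => if in_dec Nat.eq_dec n F then S n else false).
  assert (Hx : forall a, In a x -> X a).
  { intros a Ha. apply in_map_iff in Ha as [n [<- Hn]].
    apply filter_In in Hn as [_ Hn]. specialize (Hv n); rewrite Hn in Hv; exact Hv. }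
  assert (Hy : forall a, In a y -> Y a).
  { intros a Ha. apply in_map_iff in Ha as [n [<- Hn]].
    apply filter_In in Hn as [_ Hn]. specialize (Hv n).
    destruct (S n); [discriminate|exact Hv]. }
  destruct (Hfin x y Hx Hy phi S' v') as [g [Hg Hsat]].
  - intro n. unfold S', v'. destruct (in_dec Nat.eq_dec n F) as [i|ni].
    + destruct (S n) eqn:E.
      * apply in_map, filter_In; auto.
      * right. apply in_map, filter_In. rewrite E; auto.
    + left; exact Hm0.
  - apply (sat_agree _ _ v v'); auto.
    intros n Hn; unfold v'. destruct (in_dec Nat.eq_dec n F); tauto.
  - exists (fun a => if excluded_middle_informative (In a x) then g a else m0).
    split.
    + intros a _. destruct (excluded_middle_informative (In a x)); auto.
    + apply (sat_agree _ _ _ (fun n => if S' n then g (v' n) else v' n)); auto.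
      intros n Hn. unfold S', v'. destruct (in_dec Nat.eq_dec n F) as [_|]; [|tauto].
      destruct (S n) eqn:E; auto.
      destruct (excluded_middle_informative (In (v n) x)) as [_|ni]; auto.
      exfalso; apply ni, in_map, filter_In; auto.
Qed.

Lemma not_fs_finite {M X Y : C -> Prop} : (exists m, M m) -> ~ fs C M X Y ->
  exists x y : list C, (forall a, In a x -> X a) /\ (forall a, In a y -> Y a) /\
     ~ fs C M (of_list x) (setU M (of_list y)).
Proof.
  intros Hm Hn. apply NNPP; intro Hc. apply Hn, fs_finite; auto.
  intros x y Hx Hy. apply NNPP; intro Hf. apply Hc. exists x, y; auto.
Qed.

Lemma elem_sub_exl {M : C -> Prop} (w : nat -> C) l p :
  elem_sub C M -> (forall n, M (w n)) -> sat C w (exl l p) ->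
  exists u, (forall n, M (u n)) /\ (forall n, ~ In n l -> u n = w n) /\ sat C u p.
Proof.
  intros [_ [_ Helem]] Hw Hsat.
  apply Helem, sat_exl in Hsat as [u [HuM [Huw Hp]]]; auto.
  assert (Hu : forall n, M (u n)).
  { intro n. destruct (in_dec Nat.eq_dec n l); auto. rewrite Huw; auto. }
  exists u. split; [|split]; auto. apply Helem; auto.
Qed.

(* tp(c/M) is finitely satisfied in an elementary substructure M: quantify
   away the variables assigned c, demanding that they be equal, and take a
   witness in M. *)
Lemma fs_elem {M : C -> Prop} (c : C) : elem_sub C M -> fs C M (set1 c) M.
Proof.
  intros HM phi S v Hv Hs.
  destruct (proj1 HM) as [m0 Hm0].
  set (l := filter S (fv phi)). set (n0 := hd 0 l).
  set (w := fun n => if S n then m0 else v n).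
  assert (Hl : forall n, In n (fv phi) -> (In n l <-> S n = true)).
  { intros n Hn. unfold l. rewrite filter_In; tauto. }
  assert (Hw : forall n, M (w n)).
  { intro n; unfold w; specialize (Hv n); destruct (S n); auto. }
  assert (Hcn : forall n, In n l -> v n = c).
  { intros n Hn. apply filter_In in Hn as [_ Hn]. specialize (Hv n). rewrite Hn in Hv. exact Hv. }
  assert (Hex : sat C w (exl l (fand (eqs l n0) phi))).
  { apply sat_exl. exists (fun n => if in_dec Nat.eq_dec n l then c else w n).
    split; [|split]; [auto| |split].
    - intros n Hn; destruct (in_dec Nat.eq_dec n l); tauto.
    - apply sat_eqs. intros n Hn.
      destruct (in_dec Nat.eq_dec n l); [|tauto].
      destruct (in_dec Nat.eq_dec n0 l) as [|ni]; auto.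
      exfalso; apply ni. unfold n0. destruct l; [destruct Hn|left; auto].
    - apply (sat_agree _ _ v); auto.
      intros n Hn. destruct (in_dec Nat.eq_dec n l) as [i|ni]; auto.
      unfold w. destruct (S n) eqn:E; auto. exfalso; apply ni, Hl; auto. }
  destruct (elem_sub_exl w l _ HM Hw Hex) as [u [HuM [Huw [Heq Hp]]]].
  rewrite sat_eqs in Heq.
  exists (fun _ => u n0). split; [auto|].
  apply (sat_agree _ _ u); auto.
  intros n Hn. destruct (S n) eqn:E.
  - apply Heq, Hl; auto.
  - rewrite Huw; [unfold w; rewrite E; auto|].
    intro Hi. apply Hl in Hi; auto. congruence.
Qed.

Lemma ex_filter (P : C -> Prop) (l : list C) :
  exists l', forall z, In z l' <-> In z l /\ P z.
Proof.
  exists (filter (fun z => if excluded_middle_informative (P z) then true else false) l).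
  intro z. rewrite filter_In.
  destruct (excluded_middle_informative (P z)); intuition discriminate.
Qed.

(* The f.s. dichotomy for arbitrary sets B (realized) and Y (extra base):
   a failure of both alternatives is witnessed by finite tuples, which
   contradicts the dichotomy for their union. *)
Lemma dichotomy_for_sets {M B Y : C -> Prop} (c : C) : fs_dichotomy C -> elem_sub C M ->
  fs C M B (setU Y M) ->
  fs C M B (setU (setU Y M) (set1 c)) \/ fs C M (setU B (set1 c)) (setU Y M).
Proof.
  intros HD HM Hfs.
  assert (Hm : exists m, M m) by (destruct HM as [Hm _]; exact Hm).
  destruct (classic (fs C M B (setU (setU Y M) (set1 c)))) as [|h1]; [left; auto|].
  destruct (classic (fs C M (setU B (set1 c)) (setU Y M))) as [|h2]; [right; auto|].
  exfalso.
  destruct (not_fs_finite Hm h1) as [x1 [y1 [Hx1 [Hy1 Hn1]]]].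
  destruct (not_fs_finite Hm h2) as [x2 [y2 [Hx2 [Hy2 Hn2]]]].
  destruct (ex_filter B x2) as [b2 Hb2].
  destruct (ex_filter (setU Y M) (y1 ++ y2)) as [a Ha].
  set (b := x1 ++ b2).
  assert (Hb : fs C M (of_list b) (setU M (of_list a))).
  { apply (fs_mono Hfs).
    - intros z Hz. apply in_app_iff in Hz as [Hz|Hz]; auto. apply Hb2 in Hz; tauto.
    - intros z [Hz|Hz]; [right; auto|]. apply Ha in Hz; tauto. }
  destruct (HD M HM a b Hb c) as [Hc|Hc].
  - apply Hn1, (fs_mono Hc).
    + intros z Hz; apply in_app_iff; auto.
    + intros z [Hz|Hz]; [left; left; auto|].
      destruct (Hy1 z Hz) as [Hz'|Hz']; [left; right; apply Ha; rewrite in_app_iff; auto|right; auto].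
  - apply Hn2, (fs_mono Hc).
    + intros z Hz. destruct (Hx2 z Hz) as [Hz'|Hz']; [left|right; auto].
      apply in_app_iff; right; apply Hb2; auto.
    + intros z [Hz|Hz]; [left; auto|]. right. apply Ha. rewrite in_app_iff; auto.
Qed.

(* Transitivity: if tp(X / B Z) and tp(Z / B) are f.s. in M (with M within B),
   then so is tp(X Z / B): first move the X-part into M, then the Z-part. *)
Lemma fs_trans {M X Z B : C -> Prop} : (forall a, M a -> B a) ->
  fs C M X (setU B Z) -> fs C M Z B -> fs C M (setU X Z) B.
Proof.
  intros HMB HX HZ phi S v Hv Hs.
  set (SX := fun n => if excluded_middle_informative (S n = true /\ X (v n)) then true else false).
  destruct (HX phi SX v) as [gX [HgX HsX]]; [|exact Hs|].
  { intro n. unfold SX. destruct (excluded_middle_informative (S n = true /\ X (v n))) as [[_ ?]|Hn]; auto.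
    specialize (Hv n). destruct (S n).
    - destruct Hv as [?|?]; [exfalso; auto|right; auto].
    - left; auto. }
  set (vX := fun n => if SX n then gX (v n) else v n).
  set (SZ := fun n => if SX n then false else S n).
  destruct (HZ phi SZ vX) as [gZ [HgZ HsZ]]; [|exact HsX|].
  { intro n. unfold SZ, vX, SX.
    destruct (excluded_middle_informative (S n = true /\ X (v n))) as [[_ ?]|Hn]; auto.
    specialize (Hv n). destruct (S n); auto.
    destruct Hv as [?|?]; [exfalso; auto|auto]. }
  exists (fun a => if excluded_middle_informative (X a) then gX a else gZ a). split.
  - intros a Ha. destruct (excluded_middle_informative (X a)); [apply HgX; auto|].
    apply HgZ. destruct Ha; [contradiction|auto].
  - replace (fun n => if S n then (if excluded_middle_informative (X (v n)) then gX (v n)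
                                   else gZ (v n)) else v n)
      with (fun n => if SZ n then gZ (vX n) else vX n); [exact HsZ|].
    apply functional_extensionality; intro n. unfold SZ, vX, SX.
    destruct (excluded_middle_informative (S n = true /\ X (v n))) as [[HS HXv]|Hn].
    + rewrite HS. destruct (excluded_middle_informative (X (v n))); [auto|contradiction].
    + destruct (S n); auto.
      destruct (excluded_middle_informative (X (v n))); [exfalso; auto|auto].
Qed.

End FiniteSatisfiability.

Definition add_point {C I : Type} (A : I -> C -> Prop) (k : I) (c : C) : I -> C -> Prop :=
  fun j x => A j x \/ (j = k /\ x = c).

Definition lift_seq {C I : Type} (A : I -> C -> Prop) (oj : option I) : C -> Prop :=
  fun x => match oj with Some j => A j x | None => False end.

Definition down_closure {I : Type} (lt : I -> I -> Prop) (Dp : I -> Prop) (j : I) : Prop :=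
  exists d, Dp d /\ (j = d \/ lt j d).

Definition cut_order {I : Type} (lt : I -> I -> Prop) (D : I -> Prop) (a b : option I) : Prop :=
  match a, b with
  | Some i, Some j => lt i j
  | Some i, None => D i
  | None, Some j => ~ D j
  | None, None => False
  end.

Lemma cut_order_linear {I : Type} (lt : I -> I -> Prop) (D : I -> Prop) : strict_linear lt ->
  (forall a b, lt a b -> D b -> D a) -> strict_linear (cut_order lt D).
Proof.
  intros [Hirr [Htr Htot]] Hdown. split; [|split].
  - intros [x|]; simpl; auto.
  - intros [x|] [y|] [z|]; simpl; intros Hxy Hyz; eauto; try tauto.
    destruct (Htot x z) as [|[<-|Hzx]]; auto; [contradiction|].
    exfalso; apply Hyz; eauto.
  - intros [x|] [y|]; simpl.
    + destruct (Htot x y) as [|[->|]]; auto.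
    + destruct (classic (D x)); auto.
    + destruct (classic (D y)); auto.
    + auto.
Qed.

Section Sequences.
Context {L : signature} {C : structure L}.
Context {M : C -> Prop} {I : Type} {lt : I -> I -> Prop}.
Hypothesis Hlin : strict_linear lt.

Lemma add_point_fs_seq (A : I -> C -> Prop) (k : I) (c : C) :
  fs_seq C M lt A ->
  fs C M (setU (A k) (set1 c)) (setU (below lt A k) M) ->
  (forall j, lt k j -> fs C M (A j) (setU (setU (below lt A j) M) (set1 c))) ->
  fs_seq C M lt (add_point A k c).
Proof.
  destruct Hlin as [Hirr _].
  intros Hseq Hk Hlater j. unfold add_point.
  destruct (classic (j = k)) as [->|Hne].
  - apply (fs_mono Hk).
    + intros x [H|[_ H]]; [left|right]; auto.
    + intros x [[j' [Hl [H|[-> _]]]]|H];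
        [left; exists j'; auto|exfalso; eapply Hirr; eauto|right; auto].
  - destruct (classic (lt k j)) as [Hkj|Hnkj].
    + apply (fs_mono (Hlater j Hkj)).
      * intros x [H|[H _]]; [auto|contradiction].
      * intros x [[j' [Hl [H|[_ ->]]]]|H];
          [left; left; exists j'; auto|right; reflexivity|left; right; auto].
    + apply (fs_mono (Hseq j)).
      * intros x [H|[H _]]; [auto|contradiction].
      * intros x [[j' [Hl [H|[-> _]]]]|H]; [left; exists j'; auto|contradiction|right; auto].
Qed.

Lemma down_closure_closed (Dp : I -> Prop) a b :
  lt a b -> down_closure lt Dp b -> down_closure lt Dp a.
Proof.
  destruct Hlin as [_ [Htr _]].
  intros Hab [d [Hd Hbd]]. exists d; split; auto. right.
  destruct Hbd as [<-|]; eauto.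
Qed.

Section NoMaximum.
Variables (A : I -> C -> Prop) (Dp : I -> Prop).
Hypothesis no_max : forall d, Dp d -> exists d', Dp d' /\ lt d d'.

Lemma finite_below_cut (y : list C) :
  (forall z, In z y -> (exists j, down_closure lt Dp j /\ A j z) \/ M z) ->
  (forall z, In z y -> M z) \/
  exists d, Dp d /\ forall z, In z y -> below lt A d z \/ M z.
Proof.
  destruct Hlin as [_ [Htr Htot]].
  induction y as [|z y IH]; intros Hy.
  - left; intros z [].
  - assert (IH' := IH (fun z' Hz' => Hy z' (or_intror Hz'))).
    destruct (Hy z (or_introl eq_refl)) as [[j [[d [Hd Hjd]] Hjz]]|Hz].
    + destruct (no_max d Hd) as [d' [Hd' Hdd']].
      assert (Hjd' : lt j d') by (destruct Hjd as [->|]; eauto).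
      destruct IH' as [IH'|[i [Hi Hiy]]].
      * right; exists d'; split; auto.
        intros z' [<-|Hz']; [left; exists j; auto|right; auto].
      * destruct (Htot i d') as [Hid'|[<-|Hd'i]].
        -- right; exists d'; split; auto. intros z' [<-|Hz']; [left; exists j; auto|].
           destruct (Hiy z' Hz') as [[j' [Hj' Ha]]|]; [left; exists j'; eauto|auto].
        -- right; exists i; split; auto. intros z' [<-|Hz']; [left; exists j; auto|auto].
        -- right; exists i; split; auto. intros z' [<-|Hz']; [left; exists j; eauto|auto].
    + destruct IH' as [IH'|[i [Hi Hiy]]].
      * left; intros z' [<-|Hz']; auto.
      * right; exists i; split; auto. intros z' [<-|Hz']; auto.
Qed.

Lemma fs_over_cut (c : C) : elem_sub C M ->
  (forall d, Dp d -> fs C M (setU (A d) (set1 c)) (setU (below lt A d) M)) ->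
  fs C M (set1 c) (setU (fun x => exists j, down_closure lt Dp j /\ A j x) M).
Proof.
  intros HM Hd.
  apply fs_finite; [exact (proj1 HM)|].
  intros x y Hx Hy.
  destruct (finite_below_cut y Hy) as [HyM|[d [HdDp Hyd]]].
  - apply (fs_mono (fs_elem c HM)); auto.
    intros z [Hz|Hz]; auto.
  - apply (fs_mono (Hd d HdDp)).
    + intros z Hz; right; apply Hx; auto.
    + intros z [Hz|Hz]; [right; auto|]. destruct (Hyd z Hz); [left|right]; auto.
Qed.

End NoMaximum.
End Sequences.

Section Construction.
Context {L : signature} {C : structure L}.
Variables (M : C -> Prop) (I : Type) (lt : I -> I -> Prop) (A : I -> C -> Prop) (c : C).
Hypothesis HD : fs_dichotomy C.
Hypothesis HM : elem_sub C M.
Hypothesis Hlin : strict_linear lt.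
Hypothesis Hseq : fs_seq C M lt A.

Definition rigid (i : I) : Prop :=
  ~ fs C M (A i) (setU (setU (below lt A i) M) (set1 c)).

Lemma nonrigid_fs (i : I) : ~ rigid i -> fs C M (A i) (setU (setU (below lt A i) M) (set1 c)).
Proof. apply NNPP. Qed.

Lemma rigid_absorbs (i : I) : rigid i -> fs C M (setU (A i) (set1 c)) (setU (below lt A i) M).
Proof.
  intros Hi. destruct (dichotomy_for_sets c HD HM (Hseq i)); [contradiction|auto].
Qed.

Lemma maximal_rigid_case (k : I) : rigid k -> (forall j, rigid j -> ~ lt k j) ->
  fs_seq C M lt (add_point A k c).
Proof.
  intros Hk Hmax. apply add_point_fs_seq; auto using rigid_absorbs.
  intros j Hkj. apply nonrigid_fs. intros Hj. exact (Hmax j Hj Hkj).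
Qed.

Lemma rigid_cut_linear : strict_linear (cut_order lt (down_closure lt rigid)).
Proof.
  apply cut_order_linear; auto. intros a b Hab. exact (down_closure_closed Hlin rigid a b Hab).
Qed.

Section NoMaximalRigid.
Hypothesis no_max : forall d, rigid d -> exists d', rigid d' /\ lt d d'.

Let D := down_closure lt rigid.

Lemma fs_c_over_cut : fs C M (set1 c) (setU (fun x => exists j, D j /\ A j x) M).
Proof. apply fs_over_cut; auto using rigid_absorbs. Qed.

Lemma outside_cut_fs (j : I) : ~ D j -> fs C M (A j) (setU (setU (below lt A j) M) (set1 c)).
Proof. intros Hj. apply nonrigid_fs. intros Hr. apply Hj. exists j; auto. Qed.

Lemma insert_at_cut : fs_seq C M (cut_order lt D) (add_point (lift_seq A) None c).
Proof.
  apply add_point_fs_seq; [exact rigid_cut_linear| | |].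
  - intros [i|].
    + apply (fs_mono (Hseq i)); [simpl; auto|].
      intros x [[[j|] [Hl Ha]]|Hx]; [left; exists j; auto|destruct Ha|right; auto].
    + apply fs_empty.
  - apply (fs_mono fs_c_over_cut).
    + intros x [[]|H]; exact H.
    + intros x [[[j|] [Hl Ha]]|H]; [left; exists j; split; auto|destruct Ha|right; auto].
  - intros [j|] Hl; [|destruct Hl]. simpl in Hl.
    apply (fs_mono (outside_cut_fs j Hl)); [simpl; auto|].
    intros x [[[[j'|] [Hl' Ha]]|H]|H];
      [left; left; exists j'; auto|destruct Ha|left; right; auto|right; auto].
Qed.

(* Case 2 for a well order with a maximum: c goes into the least A_k outside
   the cut, since tp(A_k / A_{<k} M c) and tp(c / A_{<k} M) are f.s. *)
Lemma least_outside_cut_case : well_founded_linear lt ->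
  (exists imax, forall i, i = imax \/ lt i imax) ->
  exists k, fs_seq C M lt (add_point A k c).
Proof.
  destruct Hlin as [Hirr [Htr _]].
  intros Hwf [imax Himax].
  assert (HnDimax : ~ D imax).
  { intros [d [Hd Hid]].
    destruct (no_max d Hd) as [d' [_ Hdd']].
    apply (Hirr imax).
    destruct Hid as [<-|Hid], (Himax d') as [->|Hd'i]; eauto. }
  destruct (Hwf (fun j => ~ D j)) as [k [Hk Hkmin]]; [exists imax; auto|].
  exists k. apply add_point_fs_seq; auto.
  - apply fs_trans; [intros a Ha; right; auto|apply outside_cut_fs; auto|].
    apply (fs_mono fs_c_over_cut); [auto|].
    intros x [[j [Hl Ha]]|H]; [left|right; auto]. exists j; split; auto.
    apply NNPP; intro Hnd. exact (Hkmin j Hnd Hl).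
  - intros j Hkj. apply outside_cut_fs. intro Hd. apply Hk.
    eapply down_closure_closed; eauto.
Qed.

End NoMaximalRigid.
End Construction.

Theorem lemma3 :
  forall (L : signature) (C : structure L),
  fs_dichotomy C ->
  forall M : C -> Prop, elem_sub C M ->
  forall (I : Type) (ltI : I -> I -> Prop), strict_linear ltI ->
  forall A : I -> C -> Prop, fs_seq C M ltI A ->
  forall c : C,
    (exists (J : Type) (ltJ : J -> J -> Prop) (e : I -> J) (A' : J -> C -> Prop),
        strict_linear ltJ /\
        (forall i i', ltI i i' <-> ltJ (e i) (e i')) /\
        (forall i x, A i x -> A' (e i) x) /\
        fs_seq C M ltJ A' /\
        (exists j, A' j c)) /\
    (well_founded_linear ltI ->
     (exists imax, forall i, i = imax \/ ltI i imax) ->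
     exists A' : I -> C -> Prop,
        (forall i x, A i x -> A' i x) /\
        fs_seq C M ltI A' /\
        (exists j, A' j c)).
Proof.
  intros L C HD M HM I lt Hlin A Hseq c.
  assert (Hextends : forall k i x, A i x -> add_point A k c i x) by (left; auto).
  assert (Hcontains : forall k, add_point A k c k c) by (right; auto).
  destruct (classic (exists k, rigid M I lt A c k /\ forall j, rigid M I lt A c j -> ~ lt k j))
    as [[k [Hk Hmax]]|Hnomax].
  - pose proof (maximal_rigid_case M I lt A c HD HM Hlin Hseq k Hk Hmax) as Hk_seq.
    split.
    + exists I, lt, (fun i => i), (add_point A k c).
      split; [exact Hlin|split; [tauto|eauto]].
    + intros _ _. exists (add_point A k c). eauto.
  - assert (no_max : forall d, rigid M I lt A c d -> exists d', rigid M I lt A c d' /\ lt d d').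
    { intros d Hd. apply NNPP; intro Hc. apply Hnomax. exists d; split; auto.
      intros j Hj Hl. apply Hc. exists j; auto. }
    split.
    + exists (option I), (cut_order lt (down_closure lt (rigid M I lt A c))), (@Some I),
        (add_point (lift_seq A) None c).
      refine (conj _ (conj _ (conj _ (conj _ _)))).
      * exact (rigid_cut_linear M I lt A c Hlin).
      * intros i i'. simpl. tauto.
      * intros i x Hx. left. exact Hx.
      * apply insert_at_cut; auto.
      * exists None. right; auto.
    + intros Hwf Hmax.
      destruct (least_outside_cut_case M I lt A c HD HM Hlin Hseq no_max Hwf Hmax) as [k Hk].
      exists (add_point A k c). eauto.
Qed.
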